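(* Let $\alpha_L,\alpha_R,\mu_L,\mu_R,\gamma_{RL},\gamma_{LR}>0$ and consider on $\Sigma=\{(L,R): L\ge0,\ R\ge0,\ L+R\le1\}$ the system \[ \dot L=\alpha_L L C-\mu_L L+\gamma_{RL} R C,\qquad \dot R=\alpha_R R C-\mu_R R+\gamma_{LR} L C,\qquad C=1-L-R. \] Let $K=\begin{pmatrix}\alpha_L&\gamma_{RL}\\ \gamma_{LR}&\alpha_R\end{pmatrix}$, $M=\mathrm{diag}(\mu_L,\mu_R)$, let $\lambda_{\mathrm{PF}}>0$ be the Perron root of $M^{-1}K$, given explicitly by \[ \lambda_{\mathrm{PF}}=\frac12\left(\frac{\alpha_L}{\mu_L}+\frac{\alpha_R}{\mu_R}+\sqrt{\left(\frac{\alpha_L}{\mu_L}-\frac{\alpha_R}{\mu_R}\right)^2+\frac{4\gamma_{RL}\gamma_{LR}}{\mu_L\mu_R}}\right), \] and let $u=(u_1,u_2)^\top$ with $u_1,u_2>0$ be a corresponding positive eigenvector. An interior equilibrium is a point $(L^*,R^* )$ with $L^*>0$, $R^*>0$, $L^*+R^*<1$ at which both right-hand sides vanish. Then: (1) An interior equilibrium exists if and only if $\lambda_{\mathrm{PF}}>1$. (2) When it exists it is unique and given by \[C^*=\frac{1}{\lambda_{\mathrm{PF}}},\qquad (L^*,R^* )=\frac{1-C^*}{u_1+u_2}(u_1,u_2).\] (3) It is locally asymptotically stable. In the symmetric case $\alpha_L=\alpha_R=\alpha$, $\mu_L=\mu_R=\mu$, $\gamma_{LR}=\gamma_{RL}=\gamma$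 it is a stable node, or a stable star on the codimension-one locus $2\gamma\mu=\beta(\beta-\mu)$ where $\beta=\alpha+\gamma$; in the asymmetric case it is a stable node or a stable focus. *)

From Stdlib Require Import Reals.
From Coquelicot Require Import Coquelicot.
Open Scope R_scope.

Definition fL (aL mL gRL : R) (L Rr : R) : R :=
  aL * L * (1 - L - Rr) - mL * L + gRL * Rr * (1 - L - Rr).
Definition fR (aR mR gLR : R) (L Rr : R) : R :=
  aR * Rr * (1 - L - Rr) - mR * Rr + gLR * L * (1 - L - Rr).

Definition lamPF (aL aR mL mR gRL gLR : R) : R :=
  / 2 * (aL / mL + aR / mR +
         sqrt ((aL / mL - aR / mR) ^ 2 + 4 * gRL * gLR / (mL * mR))).

Definition interior_eq (aL aR mL mR gRL gLR : R) (L Rr : R) : Prop :=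
  0 < L /\ 0 < Rr /\ L + Rr < 1 /\
  fL aL mL gRL L Rr = 0 /\ fR aR mR gLR L Rr = 0.

Definition is_solution (aL aR mL mR gRL gLR : R) (x y : R -> R) : Prop :=
  forall t, 0 <= t ->
    is_derive x t (fL aL mL gRL (x t) (y t)) /\
    is_derive y t (fR aR mR gLR (x t) (y t)).

Definition dist2 (a b c d : R) : R := sqrt ((a - c) ^ 2 + (b - d) ^ 2).

Definition locally_asymptotically_stable (aL aR mL mR gRL gLR : R) (Ls Rs : R)
  : Prop :=
  (forall eps, 0 < eps -> exists delta, 0 < delta /\
     forall x y, is_solution aL aR mL mR gRL gLR x y ->
       dist2 (x 0) (y 0) Ls Rs < delta ->
       forall t, 0 <= t -> dist2 (x t) (y t) Ls Rs < eps) /\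
  (exists delta, 0 < delta /\
     forall x y, is_solution aL aR mL mR gRL gLR x y ->
       dist2 (x 0) (y 0) Ls Rs < delta ->
       is_lim x p_infty Ls /\ is_lim y p_infty Rs).

Definition J11 (aL mL gRL : R) (L Rr : R) : R :=
  aL * (1 - L - Rr) - aL * L - mL - gRL * Rr.
Definition J12 (aL gRL : R) (L Rr : R) : R :=
  - aL * L + gRL * (1 - L - Rr) - gRL * Rr.
Definition J21 (aR gLR : R) (L Rr : R) : R :=
  - aR * Rr + gLR * (1 - L - Rr) - gLR * L.
Definition J22 (aR mR gLR : R) (L Rr : R) : R :=
  aR * (1 - L - Rr) - aR * Rr - mR - gLR * L.

Definition mtr (a b c d : R) := a + d.
Definition mdet (a b c d : R) := a * d - b * c.
Definition mdisc (a b c d : R) := (mtr a b c d) ^ 2 - 4 * mdet a b c d.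

(* stable node: both eigenvalues real and negative (stars included) *)
Definition stable_node (a b c d : R) : Prop :=
  mtr a b c d < 0 /\ 0 < mdet a b c d /\ 0 <= mdisc a b c d.
Definition stable_star (a b c d : R) : Prop :=
  b = 0 /\ c = 0 /\ a = d /\ a < 0.
Definition stable_focus (a b c d : R) : Prop :=
  mtr a b c d < 0 /\ mdisc a b c d < 0.

(* At an interior equilibrium the equations say exactly that (L, R) is a positive
   eigenvector of M^-1 K with eigenvalue 1/C.  For a 2x2 matrix with positive
   off-diagonal entries a positive eigenvector can only belong to the Perron root,
   and it is unique up to scaling: hence C = 1/lambda_PF < 1 and (L, R) is the
   scaled Perron vector, which conversely is an equilibrium when lambda_PF > 1.
   Multiplying the rows of the Jacobian J by L and R and using the equilibrium
   equations shows that J has negative diagonal and positive determinant.  For such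
   a J the form V z = det J |z|^2 + |adj J z|^2 decreases along the linearisation at
   rate 2 tr J det J |z|^2, which dominates the quadratic nonlinearity near the
   equilibrium; a continuity argument keeps trajectories in the sublevel set where
   V' <= -k V, so that V(t) (1 + k t) <= V(0).  The type of the equilibrium is read
   off from trace, determinant and discriminant; in the symmetric case it lies on
   the diagonal, J = [[a, b], [b, a]] and 2 beta b = 2 gamma mu - beta (beta - mu). *)

From Stdlib Require Import Reals Lra Psatz.
From Coquelicot Require Import Coquelicot.
Open Scope R_scope.

Lemma continuity_pt_of_is_derive (h : R -> R) (t l : R) :
  is_derive h t l -> continuity_pt h t.
Proof.
  intro Hd. apply derivable_continuous_pt. exists l. exact (proj1 (is_derive_Reals h t l) Hd).
Qed.

Lemma le_of_is_derive_nonpos (h hd : R -> R) (a b : R) : a <= b ->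
  (forall t, a <= t <= b -> is_derive h t (hd t)) ->
  (forall t, a < t < b -> hd t <= 0) -> h b <= h a.
Proof.
  intros Hab Hd Hneg.
  destruct (Req_dec a b) as [<- | Hne]; [lra |].
  destruct (MVT_cor2 h hd a b) as [c [Hc Hin]]; [lra | |].
  - intros c Hc. apply is_derive_Reals, Hd, Hc.
  - assert (hd c * (b - a) <= 0) by (apply Rmult_le_0_r; [apply Hneg |]; lra).
    lra.
Qed.

Lemma continuous_induction (W : R -> R) (m T : R) : 0 <= T ->
  (forall t, 0 <= t <= T -> continuity_pt W t) ->
  (forall s, 0 <= s <= T -> (forall u, 0 <= u < s -> W u < m) -> W s < m) ->
  W T < m.
Proof.
  intros HT Hcont Hstep.
  set (E := fun s => 0 <= s <= T /\ forall u, 0 <= u <= s -> W u < m).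
  assert (HE0 : E 0).
  { split; [lra |]. intros u Hu. replace u with 0 by lra.
    apply Hstep; [lra | intros; lra]. }
  assert (HEb : bound E) by (exists T; intros s [Hs _]; lra).
  destruct (completeness E HEb (ex_intro _ 0 HE0)) as [s [Hub Hlub]].
  assert (Hs0 : 0 <= s) by (apply Hub; exact HE0).
  assert (HsT : s <= T) by (apply Hlub; intros x [Hx _]; lra).
  assert (Hbelow : forall u, 0 <= u < s -> W u < m).
  { intros u Hu. destruct (Rlt_le_dec (W u) m) as [| Hge]; [assumption |].
    enough (s <= u) by lra.
    apply Hlub. intros x [_ Hx]. apply Rnot_lt_le. intro Hux.
    specialize (Hx u ltac:(lra)). lra. }
  assert (HWs : W s < m) by (apply Hstep; [lra | exact Hbelow]).
  destruct (Req_dec s T) as [<- | Hne]; [exact HWs |].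
  exfalso.
  destruct (Hcont s (conj Hs0 HsT) (m - W s)) as [del [Hdel Hc]]; [lra |].
  set (s' := Rmin (s + del / 2) T).
  assert (Hss' : s < s') by (apply Rmin_glb_lt; lra).
  assert (Hs'del : s' <= s + del / 2) by apply Rmin_l.
  enough (E s') by (assert (s' <= s) by (apply Hub; assumption); lra).
  split; [split; [lra | apply Rmin_r] |].
  intros u Hu. destruct (Rlt_le_dec u s) as [Hus | Hsu]; [apply Hbelow; lra |].
  destruct (Req_dec u s) as [-> | Hne']; [exact HWs |].
  assert (Hclose : Rabs (W u - W s) < m - W s).
  { apply Hc. split; [split; [exact I | lra] |].
    simpl. unfold R_dist. rewrite Rabs_right; lra. }
  apply Rabs_def2 in Hclose. lra.
Qed.

Lemma sublevel_decay (W w : R -> R) (k m : R) : 0 <= k ->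
  (forall t, 0 <= t -> is_derive W t (w t)) ->
  (forall t, 0 <= t -> 0 <= W t) -> W 0 < m ->
  (forall t, 0 <= t -> W t < m -> w t <= - k * W t) ->
  forall t, 0 <= t -> W t * (1 + k * t) <= W 0.
Proof.
  intros Hk Hd Hpos H0 Hw.
  set (h := fun t => W t * (1 + k * t)).
  assert (Hh : forall s, 0 <= s -> (forall u, 0 <= u < s -> W u < m) -> h s <= W 0).
  { intros s Hs Hbelow. replace (W 0) with (h 0) by (unfold h; ring).
    apply (le_of_is_derive_nonpos h (fun t => w t * (1 + k * t) + W t * k)); [exact Hs | |].
    - intros t Ht. unfold h. auto_derive; [exact (ex_intro _ _ (Hd t (proj1 Ht))) |].
      erewrite (is_derive_unique _ t (w t)); [ring | exact (Hd t (proj1 Ht))].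
    - intros t Ht. specialize (Hw t ltac:(lra) (Hbelow t ltac:(lra))).
      assert (0 <= W t) by (apply Hpos; lra).
      assert (0 <= k * t) by (apply Rmult_le_pos; lra).
      assert (w t * (1 + k * t) <= - k * W t * (1 + k * t)) by (apply Rmult_le_compat_r; lra).
      assert (0 <= k * t * (k * W t)) by (apply Rmult_le_pos; [| apply Rmult_le_pos]; lra).
      lra. }
  assert (Hm : forall T, 0 <= T -> W T < m).
  { intros T HT. apply continuous_induction; [exact HT | |].
    - intros t Ht. apply (continuity_pt_of_is_derive W t (w t)), Hd. lra.
    - intros s Hs Hbelow. specialize (Hh s (proj1 Hs) Hbelow). unfold h in Hh.
      assert (0 <= W s * (k * s)) by (apply Rmult_le_pos; [apply Hpos | apply Rmult_le_pos]; lra).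
      lra. }
  intros t Ht. apply (Hh t Ht). intros u Hu. apply Hm. lra.
Qed.

Lemma is_lim_pinfty_of_sq_le (x : R -> R) (l C k : R) : 0 < k ->
  (forall t, 0 <= t -> (x t - l) ^ 2 * (1 + k * t) <= C) -> is_lim x p_infty l.
Proof.
  intros Hk Hx. apply is_lim_spec. intros [eps Heps]; simpl.
  assert (Hke : 0 < k * eps ^ 2) by (apply Rmult_lt_0_compat; [| apply pow_lt]; lra).
  exists (Rabs C / (k * eps ^ 2)). intros t Ht.
  assert (Ht0 : 0 <= t).
  { apply Rle_trans with (Rabs C / (k * eps ^ 2)); [| lra].
    apply Rdiv_le_0_compat; [apply Rabs_pos | exact Hke]. }
  assert (HC : C < k * eps ^ 2 * t).
  { apply Rle_lt_trans with (Rabs C); [apply Rle_abs |].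
    apply (Rmult_lt_compat_l (k * eps ^ 2)) in Ht; [| exact Hke].
    replace (k * eps ^ 2 * (Rabs C / (k * eps ^ 2))) with (Rabs C) in Ht by (field; lra).
    exact Ht. }
  assert (Hsq : (x t - l) ^ 2 < eps ^ 2).
  { apply Rmult_lt_reg_r with (1 + k * t); [pose proof (Rmult_le_pos k t); lra |].
    specialize (Hx t Ht0). pose proof (pow2_ge_0 eps). nra. }
  rewrite <- (Rabs_right eps) by lra.
  apply Rsqr_lt_abs_0. unfold Rsqr. nra.
Qed.

Lemma dist2_lt_iff (a b c d e : R) : 0 < e ->
  dist2 a b c d < e <-> (a - c) ^ 2 + (b - d) ^ 2 < e ^ 2.
Proof.
  intro He. unfold dist2. rewrite <- (sqrt_pow2 e) at 1 by lra.
  pose proof (pow2_ge_0 (a - c)); pose proof (pow2_ge_0 (b - d)).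
  split; [apply sqrt_lt_0_alt | intro; apply sqrt_lt_1_alt; lra].
Qed.

Lemma Rabs_lin_le (u v p q : R) :
  Rabs (u * p + v * q) <= (Rabs u + Rabs v) * (Rabs p + Rabs q).
Proof.
  eapply Rle_trans; [apply Rabs_triang |]. rewrite !Rabs_mult.
  pose proof (Rabs_pos u); pose proof (Rabs_pos v);
  pose proof (Rabs_pos p); pose proof (Rabs_pos q). nra.
Qed.

Definition solves (F1 F2 : R -> R -> R) (x y : R -> R) : Prop :=
  forall t, 0 <= t -> is_derive x t (F1 (x t) (y t)) /\ is_derive y t (F2 (x t) (y t)).

Definition asymptotically_stable (F1 F2 : R -> R -> R) (x0 y0 : R) : Prop :=
  (forall eps, 0 < eps -> exists delta, 0 < delta /\
     forall x y, solves F1 F2 x y -> dist2 (x 0) (y 0) x0 y0 < delta ->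
       forall t, 0 <= t -> dist2 (x t) (y t) x0 y0 < eps) /\
  (exists delta, 0 < delta /\
     forall x y, solves F1 F2 x y -> dist2 (x 0) (y 0) x0 y0 < delta ->
       is_lim x p_infty x0 /\ is_lim y p_infty y0).

Section PlanarLyapunov.

Variables a b c d : R.
Hypotheses (tr_neg : a + d < 0) (det_pos : 0 < a * d - b * c).

(* [lyapV z = det A |z|^2 + |adj A z|^2] for [A = [[a, b], [c, d]]], and
   [lieV z f] is its derivative at [z] in direction [f]. *)
Definition lyapV (p q : R) : R :=
  (a * d - b * c) * (p ^ 2 + q ^ 2) + (d * p - b * q) ^ 2 + (c * p - a * q) ^ 2.

Definition lieV (p q f1 f2 : R) : R :=
  2 * ((a * d - b * c) * (p * f1 + q * f2) + (d * p - b * q) * (d * f1 - b * f2)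
       + (c * p - a * q) * (c * f1 - a * f2)).

Definition lyapV_const : R := a * d - b * c + 2 * (a ^ 2 + b ^ 2 + c ^ 2 + d ^ 2).

Definition lieV_const : R := 2 * (a * d - b * c + 2 * (Rabs a + Rabs b + Rabs c + Rabs d) ^ 2).

Lemma is_derive_lyapV (x y : R -> R) (x0 y0 t dx dy : R) :
  is_derive x t dx -> is_derive y t dy ->
  is_derive (fun t => lyapV (x t - x0) (y t - y0)) t (lieV (x t - x0) (y t - y0) dx dy).
Proof.
  intros Hx Hy. unfold lyapV, lieV. auto_derive.
  - repeat split; eexists; eassumption.
  - erewrite (is_derive_unique _ t dx); [| exact Hx].
    erewrite (is_derive_unique _ t dy); [| exact Hy]. ring.
Qed.

Lemma lieV_linear (p q : R) :
  lieV p q (a * p + b * q) (c * p + d * q) = 2 * (a + d) * (a * d - b * c) * (p ^ 2 + q ^ 2).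
Proof. unfold lieV. ring. Qed.

Lemma lieV_sub (p q f1 f2 g1 g2 : R) :
  lieV p q f1 f2 = lieV p q g1 g2 + lieV p q (f1 - g1) (f2 - g2).
Proof. unfold lieV. ring. Qed.

Lemma lyapV_ge (p q : R) : (a * d - b * c) * (p ^ 2 + q ^ 2) <= lyapV p q.
Proof.
  unfold lyapV. pose proof (pow2_ge_0 (d * p - b * q)); pose proof (pow2_ge_0 (c * p - a * q)).
  lra.
Qed.

Lemma lyapV_nonneg (p q : R) : 0 <= lyapV p q.
Proof.
  eapply Rle_trans; [| apply lyapV_ge].
  apply Rmult_le_pos; [lra |]. pose proof (pow2_ge_0 p); pose proof (pow2_ge_0 q). lra.
Qed.

Lemma lyapV_le (p q : R) : lyapV p q <= lyapV_const * (p ^ 2 + q ^ 2).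
Proof.
  unfold lyapV, lyapV_const.
  assert ((d * p - b * q) ^ 2 <= 2 * (d ^ 2 + b ^ 2) * (p ^ 2 + q ^ 2)) by nra.
  assert ((c * p - a * q) ^ 2 <= 2 * (c ^ 2 + a ^ 2) * (p ^ 2 + q ^ 2)) by nra.
  nra.
Qed.

Lemma lyapV_const_pos : 0 < lyapV_const.
Proof.
  unfold lyapV_const. pose proof (pow2_ge_0 a); pose proof (pow2_ge_0 b);
  pose proof (pow2_ge_0 c); pose proof (pow2_ge_0 d). lra.
Qed.

Lemma lieV_const_pos : 0 < lieV_const.
Proof.
  unfold lieV_const. pose proof (pow2_ge_0 (Rabs a + Rabs b + Rabs c + Rabs d)). lra.
Qed.

Lemma lieV_abs_le (p q f1 f2 : R) :
  Rabs (lieV p q f1 f2) <= lieV_const * (Rabs p + Rabs q) * (Rabs f1 + Rabs f2).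
Proof.
  set (S := Rabs a + Rabs b + Rabs c + Rabs d).
  assert (Hlin : forall u v x y, Rabs u + Rabs v <= S ->
            Rabs (u * x - v * y) <= S * (Rabs x + Rabs y)).
  { intros u v x y Huv. unfold Rminus. rewrite Ropp_mult_distr_l.
    eapply Rle_trans; [apply Rabs_lin_le |]. rewrite Rabs_Ropp.
    pose proof (Rabs_pos x); pose proof (Rabs_pos y). nra. }
  pose proof (Rabs_pos a); pose proof (Rabs_pos b).
  pose proof (Rabs_pos c); pose proof (Rabs_pos d).
  assert (HSdb : Rabs d + Rabs b <= S) by (unfold S; lra).
  assert (HSca : Rabs c + Rabs a <= S) by (unfold S; lra).
  pose proof (Rabs_lin_le p q f1 f2) as Hpf.
  pose proof (Hlin d b p q HSdb) as Hdb1; pose proof (Hlin d b f1 f2 HSdb) as Hdb2.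
  pose proof (Hlin c a p q HSca) as Hca1; pose proof (Hlin c a f1 f2 HSca) as Hca2.
  set (s := Rabs p + Rabs q) in *. set (r := Rabs f1 + Rabs f2) in *.
  unfold lieV, lieV_const. rewrite Rabs_mult, (Rabs_right 2) by lra.
  eapply Rle_trans.
  { apply Rmult_le_compat_l; [lra |]. eapply Rle_trans; [apply Rabs_triang |].
    apply Rplus_le_compat_r, Rabs_triang. }
  rewrite !Rabs_mult, (Rabs_right (a * d - b * c)) by lra. fold S.
  replace (2 * (a * d - b * c + 2 * S ^ 2) * s * r)
    with (2 * ((a * d - b * c) * (s * r) + S * s * (S * r) + S * s * (S * r))) by ring.
  apply Rmult_le_compat_l; [lra |].
  repeat apply Rplus_le_compat; [apply Rmult_le_compat_l; lra | |];
    apply Rmult_le_compat; auto using Rabs_pos.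
Qed.

Lemma lyapV_lt_of_dist2_lt (x y x0 y0 mu : R) : 0 < mu ->
  dist2 x y x0 y0 < sqrt (mu / lyapV_const) -> lyapV (x - x0) (y - y0) < mu.
Proof.
  intros Hmu Hdist. pose proof lyapV_const_pos.
  apply dist2_lt_iff in Hdist; [| apply sqrt_lt_R0, Rdiv_lt_0_compat; lra].
  rewrite pow2_sqrt in Hdist by (apply Rlt_le, Rdiv_lt_0_compat; lra).
  eapply Rle_lt_trans; [apply lyapV_le |].
  apply (Rmult_lt_compat_l lyapV_const) in Hdist; [| assumption].
  replace (lyapV_const * (mu / lyapV_const)) with mu in Hdist by (field; lra). exact Hdist.
Qed.

Variables (F1 F2 : R -> R -> R) (x0 y0 G : R).
Hypothesis G_pos : 0 < G.
Hypothesis F1_remainder : forall p q,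
  Rabs (F1 (x0 + p) (y0 + q) - (a * p + b * q)) <= G * (Rabs p + Rabs q) ^ 2.
Hypothesis F2_remainder : forall p q,
  Rabs (F2 (x0 + p) (y0 + q) - (c * p + d * q)) <= G * (Rabs p + Rabs q) ^ 2.

Lemma lieV_remainder_le (p q : R) :
  Rabs (lieV p q (F1 (x0 + p) (y0 + q) - (a * p + b * q))
                 (F2 (x0 + p) (y0 + q) - (c * p + d * q)))
  <= 2 * G * lieV_const * (Rabs p + Rabs q) ^ 3.
Proof.
  eapply Rle_trans; [apply lieV_abs_le |].
  pose proof (F1_remainder p q); pose proof (F2_remainder p q).
  pose proof lieV_const_pos; pose proof (Rabs_pos p); pose proof (Rabs_pos q).
  replace (2 * G * lieV_const * (Rabs p + Rabs q) ^ 3)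
    with (lieV_const * (Rabs p + Rabs q) * (2 * G * (Rabs p + Rabs q) ^ 2)) by ring.
  apply Rmult_le_compat_l; [apply Rmult_le_pos |]; lra.
Qed.

Lemma lieV_decay : exists m k, 0 < m /\ 0 < k /\ forall p q, lyapV p q < m ->
  lieV p q (F1 (x0 + p) (y0 + q)) (F2 (x0 + p) (y0 + q)) <= - k * lyapV p q.
Proof.
  set (D := a * d - b * c). assert (HD : 0 < D) by exact det_pos.
  pose proof lieV_const_pos as HK. pose proof lyapV_const_pos as HLa.
  assert (HtD : 0 < - (a + d) * D) by (apply Rmult_lt_0_compat; lra).
  (* On [|p| + |q| <= rho] the cubic remainder is at most half the linear decay. *)
  set (rho := - (a + d) * D / (4 * G * lieV_const)).
  assert (Hrho : 0 < rho) by (apply Rdiv_lt_0_compat; [| apply Rmult_lt_0_compat]; lra).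
  exists (D * rho ^ 2 / 2), (- (a + d) * D / lyapV_const).
  split; [apply Rdiv_lt_0_compat; [apply Rmult_lt_0_compat; [| apply pow_lt] |]; lra |].
  split; [apply Rdiv_lt_0_compat; lra |].
  intros p q HV.
  set (N := p ^ 2 + q ^ 2). set (s := Rabs p + Rabs q).
  assert (Hs0 : 0 <= s) by (pose proof (Rabs_pos p); pose proof (Rabs_pos q); unfold s; lra).
  assert (HsN : s ^ 2 <= 2 * N).
  { unfold s, N. rewrite <- (pow2_abs p), <- (pow2_abs q).
    pose proof (pow2_ge_0 (Rabs p - Rabs q)). lra. }
  assert (Hs : s <= rho).
  { assert (D * N < D * (rho ^ 2 / 2)) by (pose proof (lyapV_ge p q); fold D N in H; lra).
    apply Rmult_lt_reg_l in H; [nra | exact HD]. }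
  assert (Hrem : 2 * G * lieV_const * s ^ 3 <= - (a + d) * D * N).
  { replace (- (a + d) * D * N) with (2 * G * lieV_const * (rho * (2 * N)))
      by (unfold rho; field; lra).
    replace (s ^ 3) with (s * s ^ 2) by ring.
    apply Rmult_le_compat_l; [| apply Rmult_le_compat]; nra. }
  assert (Hlin : - (- (a + d) * D / lyapV_const) * lyapV p q >= (a + d) * D * N).
  { replace (- (- (a + d) * D / lyapV_const) * lyapV p q)
      with ((a + d) * D * (lyapV p q / lyapV_const)) by (field; lra).
    assert (lyapV p q / lyapV_const <= N).
    { apply Rmult_le_reg_l with lyapV_const; [exact HLa |].
      replace (lyapV_const * (lyapV p q / lyapV_const)) with (lyapV p q) by (field; lra).
      apply lyapV_le. }
    nra. }
  rewrite (lieV_sub p q _ _ (a * p + b * q) (c * p + d * q)), lieV_linear. fold D N.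
  pose proof (lieV_remainder_le p q) as Hr. fold s in Hr.
  pose proof (Rle_abs (lieV p q (F1 (x0 + p) (y0 + q) - (a * p + b * q))
                             (F2 (x0 + p) (y0 + q) - (c * p + d * q)))).
  lra.
Qed.

Lemma lyapV_decay_along_solutions : exists m k, 0 < m /\ 0 < k /\
  forall x y, solves F1 F2 x y -> lyapV (x 0 - x0) (y 0 - y0) < m -> forall t, 0 <= t ->
    (a * d - b * c) * ((x t - x0) ^ 2 + (y t - y0) ^ 2) * (1 + k * t)
    <= lyapV (x 0 - x0) (y 0 - y0).
Proof.
  destruct lieV_decay as (m & k & Hm & Hk & Hdec).
  exists m, k. split; [exact Hm | split; [exact Hk |]].
  intros x y Hs H0 t Ht.
  eapply Rle_trans; [| apply (sublevel_decay (fun t => lyapV (x t - x0) (y t - y0))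
      (fun t => lieV (x t - x0) (y t - y0) (F1 (x t) (y t)) (F2 (x t) (y t))) k m)].
  - apply Rmult_le_compat_r; [pose proof (Rmult_le_pos k t); lra | apply lyapV_ge].
  - lra.
  - intros u Hu. destruct (Hs u Hu). apply is_derive_lyapV; assumption.
  - intros u _. apply lyapV_nonneg.
  - exact H0.
  - intros u _ Hu. specialize (Hdec _ _ Hu). rewrite !Rplus_minus in Hdec. exact Hdec.
  - exact Ht.
Qed.

Theorem asymptotically_stable_of_linearization : asymptotically_stable F1 F2 x0 y0.
Proof.
  destruct lyapV_decay_along_solutions as (m & k & Hm & Hk & Hdecay).
  set (D := a * d - b * c). assert (HD : 0 < D) by exact det_pos.
  pose proof lyapV_const_pos.
  split.
  - intros eps Heps. set (mu := Rmin m (D * eps ^ 2)).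
    assert (Hmu : 0 < mu)
      by (apply Rmin_glb_lt; [| apply Rmult_lt_0_compat; [| apply pow_lt]]; lra).
    exists (sqrt (mu / lyapV_const)). split; [apply sqrt_lt_R0, Rdiv_lt_0_compat; lra |].
    intros x y Hs H0 t Ht. apply lyapV_lt_of_dist2_lt in H0; [| exact Hmu].
    assert (mu <= m) by apply Rmin_l. assert (mu <= D * eps ^ 2) by apply Rmin_r.
    specialize (Hdecay x y Hs ltac:(lra) t Ht). fold D in Hdecay.
    apply dist2_lt_iff; [exact Heps |]. apply (Rmult_lt_reg_l D); [exact HD |].
    assert (0 <= D * ((x t - x0) ^ 2 + (y t - y0) ^ 2) * (k * t)).
    { apply Rmult_le_pos; [apply Rmult_le_pos | apply Rmult_le_pos]; try lra.
      pose proof (pow2_ge_0 (x t - x0)); pose proof (pow2_ge_0 (y t - y0)). lra. }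
    lra.
  - exists (sqrt (m / lyapV_const)). split; [apply sqrt_lt_R0, Rdiv_lt_0_compat; lra |].
    intros x y Hs H0. apply lyapV_lt_of_dist2_lt in H0; [| exact Hm].
    split; apply (is_lim_pinfty_of_sq_le _ _ (lyapV (x 0 - x0) (y 0 - y0) / D) k Hk);
      intros t Ht; specialize (Hdecay x y Hs H0 t Ht); fold D in Hdecay;
      apply (Rmult_le_reg_l D); try exact HD;
      replace (D * (lyapV (x 0 - x0) (y 0 - y0) / D)) with (lyapV (x 0 - x0) (y 0 - y0))
        by (field; lra);
      pose proof (Rmult_le_pos k t ltac:(lra) Ht);
      pose proof (pow2_ge_0 (x t - x0)); pose proof (pow2_ge_0 (y t - y0)).
    + assert (0 <= D * (y t - y0) ^ 2 * (1 + k * t)) by (apply Rmult_le_pos; nra). nra.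
    + assert (0 <= D * (x t - x0) ^ 2 * (1 + k * t)) by (apply Rmult_le_pos; nra). nra.
Qed.

End PlanarLyapunov.

Lemma pos_eigval_eq_perron (x y g h p q s : R) :
  0 < g -> 0 < h -> 0 < p -> 0 < q ->
  x * p + g * q = s * p -> h * p + y * q = s * q ->
  s = / 2 * (x + y + sqrt ((x - y) ^ 2 + 4 * g * h)).
Proof.
  intros Hg Hh Hp Hq E1 E2.
  assert (Hsx : (s - x) * p = g * q) by lra.
  assert (Hsy : (s - y) * q = h * p) by lra.
  assert (Hprod : (s - x) * (s - y) = g * h).
  { apply (Rmult_eq_reg_r (p * q)); [| nra].
    transitivity (((s - x) * p) * ((s - y) * q)); [ring |]. rewrite Hsx, Hsy. ring. }
  assert (0 < s - x) by nra.
  assert (0 < s - y) by nra.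
  assert (Hdisc : (x - y) ^ 2 + 4 * g * h = (2 * s - x - y) ^ 2).
  { replace (4 * g * h) with (4 * ((s - x) * (s - y))) by (rewrite Hprod; ring). ring. }
  rewrite Hdisc, sqrt_pow2 by lra. field.
Qed.

Lemma pos_eigvec_proportional (x g p q u1 u2 s : R) : g <> 0 ->
  x * p + g * q = s * p -> x * u1 + g * u2 = s * u1 -> p * u2 = q * u1.
Proof.
  intros Hg E1 E2. apply (Rmult_eq_reg_l g); [| exact Hg].
  transitivity ((s * p - x * p) * u1 - p * (s * u1 - x * u1 - g * u2)); [ring |].
  rewrite <- E1, <- E2. ring.
Qed.

Lemma fR_swap (a m g L Rr : R) : fR a m g L Rr = fL a m g Rr L.
Proof. unfold fR, fL. ring. Qed.

Lemma J21_swap (a g L Rr : R) : J21 a g L Rr = J12 a g Rr L.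
Proof. unfold J21, J12. ring. Qed.

Lemma J22_swap (a m g L Rr : R) : J22 a m g L Rr = J11 a m g Rr L.
Proof. unfold J22, J11. ring. Qed.

Lemma fL_eq0_iff (a m g L Rr : R) : 0 < m -> L + Rr <> 1 ->
  fL a m g L Rr = 0 <-> a / m * L + g / m * Rr = / (1 - L - Rr) * L.
Proof.
  intros Hm HC.
  assert (Hid : fL a m g L Rr =
                m * (1 - L - Rr) * (a / m * L + g / m * Rr - / (1 - L - Rr) * L))
    by (unfold fL; field; lra).
  rewrite Hid. split; intro H.
  - destruct (Rmult_integral _ _ H) as [H0 | H0]; [| lra].
    exfalso. destruct (Rmult_integral _ _ H0); lra.
  - rewrite H, Rminus_diag. ring.
Qed.

Lemma fR_eq0_iff (a m g L Rr : R) : 0 < m -> L + Rr <> 1 ->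
  fR a m g L Rr = 0 <-> g / m * L + a / m * Rr = / (1 - L - Rr) * Rr.
Proof.
  intros Hm HC. rewrite fR_swap, fL_eq0_iff by lra.
  replace (1 - Rr - L) with (1 - L - Rr) by ring. lra.
Qed.

Lemma fL_remainder_le (a m g L Rr p q : R) : 0 < a -> 0 < g -> fL a m g L Rr = 0 ->
  Rabs (fL a m g (L + p) (Rr + q) - (J11 a m g L Rr * p + J12 a g L Rr * q))
  <= (a + g) * (Rabs p + Rabs q) ^ 2.
Proof.
  intros Ha Hg Heq.
  replace (fL a m g (L + p) (Rr + q) - (J11 a m g L Rr * p + J12 a g L Rr * q))
    with (fL a m g L Rr - (a * p + g * q) * (p + q)) by (unfold fL, J11, J12; ring).
  rewrite Heq, Rminus_0_l, Rabs_Ropp, Rabs_mult.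
  pose proof (Rabs_lin_le a g p q) as Hlin.
  rewrite (Rabs_right a), (Rabs_right g) in Hlin by lra.
  pose proof (Rabs_triang p q).
  pose proof (Rabs_pos (a * p + g * q)); pose proof (Rabs_pos (p + q)).
  replace ((a + g) * (Rabs p + Rabs q) ^ 2)
    with ((a + g) * (Rabs p + Rabs q) * (Rabs p + Rabs q)) by ring.
  apply Rmult_le_compat; assumption.
Qed.

Lemma J11_neg (a m g L Rr : R) : 0 < a -> 0 < g -> 0 < L -> 0 < Rr -> L + Rr < 1 ->
  fL a m g L Rr = 0 -> J11 a m g L Rr < 0.
Proof.
  intros Ha Hg HL HR HC Heq. apply (Rmult_lt_reg_l L); [exact HL |].
  replace (L * J11 a m g L Rr)
    with (fL a m g L Rr - g * Rr * (1 - L - Rr) - L * (a * L + g * Rr)) by (unfold fL, J11; ring).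
  rewrite Heq.
  assert (0 < g * Rr * (1 - L - Rr)) by (apply Rmult_lt_0_compat; [apply Rmult_lt_0_compat |]; lra).
  assert (0 < L * (a * L + g * Rr)) by (apply Rmult_lt_0_compat; nra).
  lra.
Qed.

Lemma jacobian_det_pos (aL aR mL mR gRL gLR L Rr : R) :
  0 < aL -> 0 < aR -> 0 < gRL -> 0 < gLR -> 0 < L -> 0 < Rr -> L + Rr < 1 ->
  fL aL mL gRL L Rr = 0 -> fR aR mR gLR L Rr = 0 ->
  0 < mdet (J11 aL mL gRL L Rr) (J12 aL gRL L Rr) (J21 aR gLR L Rr) (J22 aR mR gLR L Rr).
Proof.
  intros HaL HaR HgRL HgLR HL HR HC E1 E2.
  set (C := 1 - L - Rr). set (s1 := aL * L + gRL * Rr). set (s2 := aR * Rr + gLR * L).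
  assert (HL11 : L * J11 aL mL gRL L Rr = fL aL mL gRL L Rr - (gRL * Rr * C + L * s1))
    by (unfold fL, J11, C, s1; ring).
  assert (HR22 : Rr * J22 aR mR gLR L Rr = fR aR mR gLR L Rr - (gLR * L * C + Rr * s2))
    by (unfold fR, J22, C, s2; ring).
  rewrite E1, Rminus_0_l in HL11. rewrite E2, Rminus_0_l in HR22.
  apply (Rmult_lt_reg_l (L * Rr)); [nra |]. rewrite Rmult_0_r.
  replace (L * Rr * mdet (J11 aL mL gRL L Rr) (J12 aL gRL L Rr)
                         (J21 aR gLR L Rr) (J22 aR mR gLR L Rr))
    with (L * J11 aL mL gRL L Rr * (Rr * J22 aR mR gLR L Rr)
          - L * Rr * J12 aL gRL L Rr * J21 aR gLR L Rr) by (unfold mdet; ring).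
  rewrite HL11, HR22.
  replace (J12 aL gRL L Rr) with (gRL * C - s1) by (unfold J12, C, s1; ring).
  replace (J21 aR gLR L Rr) with (gLR * C - s2) by (unfold J21, C, s2; ring).
  replace (- (gRL * Rr * C + L * s1) * - (gLR * L * C + Rr * s2)
           - L * Rr * (gRL * C - s1) * (gLR * C - s2))
    with ((gRL * Rr * s2 + gLR * L * s1) * C * (L + Rr)) by ring.
  assert (0 < s1) by (unfold s1; nra). assert (0 < s2) by (unfold s2; nra).
  assert (0 < C) by (unfold C; lra).
  assert (0 < gRL * Rr * s2) by (apply Rmult_lt_0_compat; [apply Rmult_lt_0_compat |]; lra).
  assert (0 < gLR * L * s1) by (apply Rmult_lt_0_compat; [apply Rmult_lt_0_compat |]; lra).
  apply Rmult_lt_0_compat; [apply Rmult_lt_0_compat |]; lra.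
Qed.

Lemma J12_at_diagonal_equilibrium (a m g L : R) : 0 < L -> fL a m g L L = 0 ->
  2 * (a + g) * J12 a g L L = 2 * g * m - (a + g) * ((a + g) - m).
Proof.
  intros HL Heq.
  assert (Hbeta : (a + g) * (1 - L - L) - m = 0).
  { apply (Rmult_eq_reg_l L); [| lra]. rewrite Rmult_0_r, <- Heq. unfold fL. ring. }
  transitivity (2 * g * m - (a + g) * ((a + g) - m)
                + (2 * g + (a + g)) * ((a + g) * (1 - L - L) - m)).
  - unfold J12. ring.
  - rewrite Hbeta. ring.
Qed.

Lemma stable_node_or_focus (a b c d : R) : mtr a b c d < 0 -> 0 < mdet a b c d ->
  stable_node a b c d \/ stable_focus a b c d.
Proof.
  intros Htr Hdet. destruct (Rle_lt_dec 0 (mdisc a b c d)).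
  - left. repeat split; assumption.
  - right. split; assumption.
Qed.

Lemma stable_node_symmetric (a b : R) : a < 0 -> 0 < mdet a b b a -> b <> 0 ->
  stable_node a b b a /\ ~ stable_star a b b a.
Proof.
  intros Ha Hdet Hb. split.
  - unfold stable_node, mdisc, mtr. repeat split; [lra | exact Hdet |].
    unfold mdet. replace ((a + a) ^ 2 - 4 * (a * a - b * b)) with (4 * b ^ 2) by ring.
    pose proof (pow2_ge_0 b). lra.
  - intros [Hb0 _]. exact (Hb Hb0).
Qed.

Section Model.

Variables aL aR mL mR gRL gLR : R.
Hypotheses (haL : 0 < aL) (haR : 0 < aR) (hmL : 0 < mL) (hmR : 0 < mR)
  (hgRL : 0 < gRL) (hgLR : 0 < gLR).

Local Notation lam := (lamPF aL aR mL mR gRL gLR).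
Local Notation is_eq := (interior_eq aL aR mL mR gRL gLR).

Lemma lamPF_of_pos_eigvec (p q s : R) : 0 < p -> 0 < q ->
  aL / mL * p + gRL / mL * q = s * p -> gLR / mR * p + aR / mR * q = s * q -> s = lam.
Proof.
  intros Hp Hq E1 E2. unfold lamPF.
  replace (4 * gRL * gLR / (mL * mR)) with (4 * (gRL / mL) * (gLR / mR)) by (field; lra).
  apply (pos_eigval_eq_perron _ _ _ _ p q); try apply Rdiv_lt_0_compat; assumption.
Qed.

Lemma interior_eq_iff (L Rr : R) : is_eq L Rr <->
  0 < L /\ 0 < Rr /\ L + Rr < 1 /\
  aL / mL * L + gRL / mL * Rr = / (1 - L - Rr) * L /\
  gLR / mR * L + aR / mR * Rr = / (1 - L - Rr) * Rr.
Proof.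
  unfold interior_eq.
  split; intros (HL & HR & HC & E1 & E2); repeat split; try assumption.
  all: assert (HC' : L + Rr <> 1) by lra.
  - exact (proj1 (fL_eq0_iff aL mL gRL L Rr hmL HC') E1).
  - exact (proj1 (fR_eq0_iff aR mR gLR L Rr hmR HC') E2).
  - exact (proj2 (fL_eq0_iff aL mL gRL L Rr hmL HC') E1).
  - exact (proj2 (fR_eq0_iff aR mR gLR L Rr hmR HC') E2).
Qed.

Lemma interior_eq_lamPF (L Rr : R) : is_eq L Rr -> / (1 - L - Rr) = lam.
Proof.
  intro Hi. apply interior_eq_iff in Hi as (HL & HR & _ & E1 & E2).
  exact (lamPF_of_pos_eigvec L Rr _ HL HR E1 E2).
Qed.

Lemma lamPF_gt_1_of_interior_eq (L Rr : R) : is_eq L Rr -> 1 < lam.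
Proof.
  intro Hi. rewrite <- (interior_eq_lamPF L Rr Hi).
  destruct Hi as (HL & HR & HC & _). rewrite <- Rinv_1 at 1.
  apply Rinv_lt_contravar; lra.
Qed.

Section PerronVector.

Variables u1 u2 : R.
Hypotheses (hu1 : 0 < u1) (hu2 : 0 < u2)
  (hev1 : aL / mL * u1 + gRL / mL * u2 = lam * u1)
  (hev2 : gLR / mR * u1 + aR / mR * u2 = lam * u2).

Lemma interior_eq_formula (L Rr : R) : is_eq L Rr ->
  1 - L - Rr = / lam /\
  L = (1 - / lam) / (u1 + u2) * u1 /\ Rr = (1 - / lam) / (u1 + u2) * u2.
Proof.
  intro Hi. pose proof (interior_eq_lamPF L Rr Hi) as Hlam.
  apply interior_eq_iff in Hi as (HL & HR & HC & E1 & _).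
  rewrite Hlam in E1.
  assert (Hprop : L * u2 = Rr * u1).
  { apply (pos_eigvec_proportional (aL / mL) (gRL / mL) L Rr u1 u2 lam);
      [apply Rgt_not_eq, Rdiv_lt_0_compat | |]; assumption. }
  assert (HC' : 1 - L - Rr = / lam) by (rewrite <- Hlam, Rinv_inv; reflexivity).
  rewrite <- HC'. replace (1 - (1 - L - Rr)) with (L + Rr) by ring.
  split; [reflexivity | split]; apply (Rmult_eq_reg_l (u1 + u2)); try lra;
    field_simplify; lra.
Qed.

Lemma interior_eq_of_lamPF_gt_1 : 1 < lam ->
  is_eq ((1 - / lam) / (u1 + u2) * u1) ((1 - / lam) / (u1 + u2) * u2).
Proof.
  intro Hlam. set (k := (1 - / lam) / (u1 + u2)).
  assert (Hil : / lam < 1) by (rewrite <- Rinv_1; apply Rinv_lt_contravar; lra).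
  assert (Hk : 0 < k) by (apply Rdiv_lt_0_compat; [pose proof (Rinv_0_lt_compat lam) |]; lra).
  assert (HC : / (1 - k * u1 - k * u2) = lam).
  { replace (1 - k * u1 - k * u2) with (/ lam) by (unfold k; field; lra).
    apply Rinv_inv. }
  apply interior_eq_iff. rewrite HC.
  repeat split; try (apply Rmult_lt_0_compat; assumption).
  - replace (k * u1 + k * u2) with (1 - / lam) by (unfold k; field; lra).
    pose proof (Rinv_0_lt_compat lam); lra.
  - transitivity (k * (aL / mL * u1 + gRL / mL * u2)); [ring |]. rewrite hev1. ring.
  - transitivity (k * (gLR / mR * u1 + aR / mR * u2)); [ring |]. rewrite hev2. ring.
Qed.

End PerronVector.

Lemma interior_eq_jacobian (L Rr : R) : is_eq L Rr ->
  J11 aL mL gRL L Rr < 0 /\ J22 aR mR gLR L Rr < 0 /\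
  0 < mdet (J11 aL mL gRL L Rr) (J12 aL gRL L Rr) (J21 aR gLR L Rr) (J22 aR mR gLR L Rr).
Proof.
  intros (HL & HR & HC & E1 & E2). split; [| split].
  - apply J11_neg; assumption.
  - rewrite J22_swap. rewrite fR_swap in E2. apply J11_neg; try assumption; lra.
  - apply jacobian_det_pos; assumption.
Qed.

Lemma interior_eq_asymptotically_stable (L Rr : R) : is_eq L Rr ->
  locally_asymptotically_stable aL aR mL mR gRL gLR L Rr.
Proof.
  intro Hi. destruct (interior_eq_jacobian L Rr Hi) as (H11 & H22 & Hdet).
  destruct Hi as (_ & _ & _ & E1 & E2).
  change (asymptotically_stable (fL aL mL gRL) (fR aR mR gLR) L Rr).
  apply (asymptotically_stable_of_linearization
           (J11 aL mL gRL L Rr) (J12 aL gRL L Rr) (J21 aR gLR L Rr) (J22 aR mR gLR L Rr)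
           ltac:(lra) Hdet _ _ _ _ (aL + gRL + aR + gLR) ltac:(lra)).
  - intros p q. eapply Rle_trans; [apply fL_remainder_le; assumption |].
    apply Rmult_le_compat_r; [apply pow2_ge_0 | lra].
  - intros p q. rewrite fR_swap in E2 |- *.
    rewrite J21_swap, J22_swap, (Rplus_comm (J12 aR gLR Rr L * p)).
    eapply Rle_trans; [apply fL_remainder_le; assumption |].
    rewrite (Rplus_comm (Rabs q)). apply Rmult_le_compat_r; [apply pow2_ge_0 | lra].
Qed.

Lemma interior_eq_symmetric_diag (L Rr : R) :
  aL = aR -> mL = mR -> gLR = gRL -> is_eq L Rr -> L = Rr.
Proof.
  intros EaR EmR EgLR Hi.
  assert (Hone : (aL + gRL) / mL = lam).
  { apply lamPF_of_pos_eigvec with 1 1; [lra | lra | field; lra |].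
    rewrite <- EaR, <- EmR, EgLR. field. lra. }
  pose proof (interior_eq_lamPF L Rr Hi) as Hlam.
  apply interior_eq_iff in Hi as (HL & HR & HC & E1 & _).
  rewrite Hlam in E1.
  rewrite <- (Rmult_1_r L), <- (Rmult_1_r Rr).
  apply (pos_eigvec_proportional (aL / mL) (gRL / mL) L Rr 1 1 lam);
    [apply Rgt_not_eq, Rdiv_lt_0_compat; assumption | exact E1 |].
  rewrite <- Hone. field. lra.
Qed.

Lemma interior_eq_symmetric_type (L Rr : R) : is_eq L Rr ->
  aL = aR /\ mL = mR /\ gLR = gRL ->
  let beta := aL + gRL in
  (2 * gRL * mL = beta * (beta - mL) ->
     stable_star (J11 aL mL gRL L Rr) (J12 aL gRL L Rr) (J21 aR gLR L Rr) (J22 aR mR gLR L Rr)) /\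
  (2 * gRL * mL <> beta * (beta - mL) ->
     stable_node (J11 aL mL gRL L Rr) (J12 aL gRL L Rr) (J21 aR gLR L Rr) (J22 aR mR gLR L Rr) /\
     ~ stable_star (J11 aL mL gRL L Rr) (J12 aL gRL L Rr) (J21 aR gLR L Rr) (J22 aR mR gLR L Rr)).
Proof.
  intros Hi (EaR & EmR & EgLR) beta.
  destruct (interior_eq_symmetric_diag L Rr EaR EmR EgLR Hi).
  destruct (interior_eq_jacobian L L Hi) as (H11 & _ & Hdet).
  destruct Hi as (HL & _ & _ & E1 & _).
  pose proof (J12_at_diagonal_equilibrium aL mL gRL L HL E1) as Hb. fold beta in Hb.
  rewrite <- EaR, <- EmR, EgLR, J21_swap, J22_swap in Hdet |- *.
  split; intro Hbeta.
  - assert (Hb0 : J12 aL gRL L L = 0).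
    { apply (Rmult_eq_reg_l (2 * beta)); [| unfold beta; lra]. lra. }
    rewrite Hb0. repeat split; lra.
  - apply stable_node_symmetric; [exact H11 | exact Hdet |].
    intro Hb0. rewrite Hb0, Rmult_0_r in Hb. lra.
Qed.

End Model.

Theorem theorem3p7 (aL aR mL mR gRL gLR u1 u2 : R)
  (haL : 0 < aL) (haR : 0 < aR) (hmL : 0 < mL) (hmR : 0 < mR)
  (hgRL : 0 < gRL) (hgLR : 0 < gLR)
  (hu1 : 0 < u1) (hu2 : 0 < u2)
  (hev1 : aL / mL * u1 + gRL / mL * u2 = lamPF aL aR mL mR gRL gLR * u1)
  (hev2 : gLR / mR * u1 + aR / mR * u2 = lamPF aL aR mL mR gRL gLR * u2) :
  let lam := lamPF aL aR mL mR gRL gLR in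
  (* (1) existence iff lambda_PF > 1 *)
  ((exists L Rr, interior_eq aL aR mL mR gRL gLR L Rr) <-> 1 < lam) /\
  (* (2) uniqueness and explicit formula *)
  (forall L Rr, interior_eq aL aR mL mR gRL gLR L Rr ->
     1 - L - Rr = / lam /\
     L = (1 - / lam) / (u1 + u2) * u1 /\
     Rr = (1 - / lam) / (u1 + u2) * u2) /\
  (* (3) stability and type *)
  (forall L Rr, interior_eq aL aR mL mR gRL gLR L Rr ->
     let a := J11 aL mL gRL L Rr in
     let b := J12 aL gRL L Rr in
     let c := J21 aR gLR L Rr in
     let d := J22 aR mR gLR L Rr in
     locally_asymptotically_stable aL aR mL mR gRL gLR L Rr /\
     ((aL = aR /\ mL = mR /\ gLR = gRL) ->
        let beta := aL + gRL in
        (2 * gRL * mL = beta * (beta - mL) -> stable_star a b c d) /\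
        (2 * gRL * mL <> beta * (beta - mL) ->
           stable_node a b c d /\ ~ stable_star a b c d)) /\
     (~ (aL = aR /\ mL = mR /\ gLR = gRL) ->
        stable_node a b c d \/ stable_focus a b c d)).
Proof.
  intro lam. split; [split | split].
  - intros (L & Rr & Hi). apply lamPF_gt_1_of_interior_eq with L Rr; assumption.
  - intro Hlam. eexists. eexists.
    apply interior_eq_of_lamPF_gt_1 with (u1 := u1) (u2 := u2); assumption.
  - intros L Rr Hi. apply interior_eq_formula with (u1 := u1) (u2 := u2); assumption.
  - intros L Rr Hi a b c d.
    destruct (interior_eq_jacobian aL aR mL mR gRL gLR haL haR hgRL hgLR L Rr Hi)
      as (Ha & Hd & Hdet).
    split; [| split].
    + apply interior_eq_asymptotically_stable; assumption.
    + apply interior_eq_symmetric_type; assumption.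
    + intros _. apply stable_node_or_focus; [unfold mtr, a, d; lra | exact Hdet].
Qed.
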